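(* Consider the linear model $\mathbf{Y} \mid \boldsymbol{\beta},\sigma^2 \sim N_n(\mathbf{X}\boldsymbol{\beta}, \sigma^2 \mathbf{I}_n)$ with $\mathbf{X}\in\mathbb{R}^{n\times p}$ fixed, and the conjugate global-local prior $$\beta_j \mid \sigma^2,\tau^2,\lambda_j^2 \sim N(0, \sigma^2\tau^2\lambda_j^2)\ \text{independently},\ j=1,\dots,p, \qquad \pi(\sigma^2)\propto \sigma^{-2},$$ with arbitrary priors on $\tau^2$ and $\lambda_1^2,\dots,\lambda_p^2$. Under this model, the conditional posterior mean of $\sigma^2$ is $$\mathbb{E}[\sigma^2 \mid \mathbf{Y}, \boldsymbol{\beta}, \tau^2, \lambda_1^2,\dots,\lambda_p^2] = \frac{\lVert \mathbf{Y} - \mathbf{X}\boldsymbol{\beta}\rVert^2 + \sum_{j=1}^p \beta_j^2/(\lambda_j^2\tau^2)}{n+p-2}.$$ Let $\boldsymbol{\beta}^*$ denote the true vector of regression coefficients, with $\lVert \boldsymbol{\beta}^*\rVert_0 = q$ and $\max_j \beta_j^{*2} = M_1$ for some constant $M_1\in\mathbb{R}$. Let $\sigma^* = \lVert \mathbf{Y} - \mathbf{X}\boldsymbol{\beta}^*\rVert/\sqrt{n}$ be the oracle estimator and suppose $\sigma^* = O(1)$. Suppose also that for every $j\in\{1,\dots,p\}$ with $\beta^*_j \neq 0$ we have $\tau^2\lambda_j^2 > M_2$ for some constant $M_2 \in \mathbb{R}$ (with $M_2>0$). Then $$\mathbb{E}[\sigma^2 \mid \mathbf{Y}, \boldsymbol{\beta}^*,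 \tau^2, \lambda_1^2,\dots,\lambda_p^2] \leq \frac{n\sigma^{*2}}{n+p-2} + \frac{q M_1/M_2}{n+p-2}.$$ In particular, as $p/n\to\infty$ and $q/p\to 0$, $$\mathbb{E}[\sigma^2 \mid \mathbf{Y}, \boldsymbol{\beta}^*, \tau^2, \lambda_1^2,\dots,\lambda_p^2] = o(1).$$
   Context: $\lVert\cdot\rVert_0$ denotes the number of nonzero entries and $\lVert\cdot\rVert$ the Euclidean norm. The conditional posterior mean is evaluated at $\boldsymbol{\beta}=\boldsymbol{\beta}^*$; terms with $\beta^*_j=0$ contribute zero to the sum. It is assumed $n+p>2$. *)

From HB Require Import structures.
From mathcomp Require Import all_boot all_order all_algebra.
From mathcomp Require Import all_classical all_reals all_analysis.
Set Implicit Arguments. Unset Strict Implicit. Unset Printing Implicit Defensive.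
Import Order.TTheory GRing.Theory Num.Theory.
Local Open Scope ring_scope.

Definition sqnorm (R : numDomainType) (m : nat) (v : 'cV[R]_m) : R :=
  \sum_(i < m) v i 0 ^+ 2.

Definition l0norm (R : numDomainType) (p : nat) (beta : 'cV[R]_p) : nat :=
  #|[set j : 'I_p | beta j 0 != 0]|.

(* max_j beta_j^2 (0 when p = 0) *)
Definition maxsq (R : realDomainType) (p : nat) (beta : 'cV[R]_p) : R :=
  \big[Num.max/0]_(j < p) beta j 0 ^+ 2.

Definition oracle_sigma (R : rcfType) (n p : nat) (X : 'M[R]_(n, p))
  (Y : 'cV[R]_n) (beta : 'cV[R]_p) : R :=
  Num.sqrt (sqnorm (Y - X *m beta)) / Num.sqrt n%:R.

(* Conditional posterior mean E[sigma^2 | Y, beta, tau^2, lambda^2] under the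
   conjugate global-local model (inverse-gamma full conditional), as given in
   the statement; terms with beta_j = 0 contribute zero. *)
Definition cond_post_mean_sigma2 (R : realFieldType) (n p : nat)
  (X : 'M[R]_(n, p)) (Y : 'cV[R]_n) (beta : 'cV[R]_p) (tau2 : R)
  (lam2 : 'I_p -> R) : R :=
  (sqnorm (Y - X *m beta)
     + \sum_(j < p | beta j 0 != 0) beta j 0 ^+ 2 / (lam2 j * tau2))
  / ((n + p)%:R - 2).

From HB Require Import structures.
From mathcomp Require Import all_boot all_order all_algebra.
From mathcomp Require Import all_classical all_reals all_analysis.
From mathcomp Require Import ring lra.
Set Implicit Arguments. Unset Strict Implicit. Unset Printing Implicit Defensive.
Import Order.TTheory GRing.Theory Num.Theory.
Import numFieldNormedType.Exports.
Local Open Scope classical_set_scope.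
Local Open Scope ring_scope.

(* The residual sum of squares at beta* is n sigma*^2, and on the q coordinates
   where beta*_j <> 0 each penalty term beta_j^2 / (lambda_j^2 tau^2) is below
   M1 / M2; this gives the finite-sample bound. Once p > n >= 1 the denominator
   n + p - 2 is at least p / 2, so the bound is O(n/p + q/p), which vanishes
   when p/n -> oo and q/p -> 0. *)

Lemma sqnorm_ge0 (R : realDomainType) m (v : 'cV[R]_m) : 0 <= sqnorm v.
Proof. by apply: sumr_ge0 => i _; rewrite sqr_ge0. Qed.

Lemma sqr_le_maxsq (R : realDomainType) p (b : 'cV[R]_p) j :
  b j 0 ^+ 2 <= maxsq b.
Proof. by rewrite /maxsq (bigD1 j) //= le_max lexx. Qed.

Lemma maxsq_ge0 (R : realDomainType) p (b : 'cV[R]_p) : 0 <= maxsq b.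
Proof.
rewrite /maxsq; elim/big_ind: _ => //=; last by move=> i _; rewrite sqr_ge0.
by move=> x y x_ge0 y_ge0; rewrite le_max x_ge0.
Qed.

Lemma mulr_oracle_sigma_sqr (R : rcfType) n p (X : 'M[R]_(n, p))
    (Y : 'cV[R]_n) (b : 'cV[R]_p) :
  n%:R * oracle_sigma X Y b ^+ 2 = sqnorm (Y - X *m b).
Proof.
case: n X Y => [|n] X Y; first by rewrite mul0r /sqnorm big_ord0.
rewrite /oracle_sigma expr_div_n !sqr_sqrtr ?ler0n ?sqnorm_ge0 //.
by rewrite mulrC divfK // pnatr_eq0.
Qed.

Lemma sum_sqr_div_le_l0norm_maxsq (R : realFieldType) p (b : 'cV[R]_p)
    (s : 'I_p -> R) (M2 : R) :
  0 < M2 -> (forall j, b j 0 != 0 -> M2 < s j) ->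
  \sum_(j < p | b j 0 != 0) b j 0 ^+ 2 / s j <= (l0norm b)%:R * maxsq b / M2.
Proof.
move=> M2_gt0 M2_lt_s.
apply: le_trans (_ : \sum_(j < p | b j 0 != 0) maxsq b / M2 <= _).
  apply: ler_sum => j /M2_lt_s M2_lt_sj.
  have sj_gt0 := lt_trans M2_gt0 M2_lt_sj.
  apply: ler_pM; [exact: sqr_ge0 | by rewrite invr_ge0 ltW |
                  exact: sqr_le_maxsq |].
  by rewrite lef_pV2 ?posrE // ltW.
rewrite (eq_bigl (fun j => j \in [set j : 'I_p | b j 0 != 0]%SET)) => [|j].
  by rewrite sumr_const /l0norm mulr_natl mulrnAl.
by rewrite !inE.
Qed.

Lemma natrD_sub2_gt0 (R : numDomainType) n p :
  (2 < n + p)%N -> 0 < (n + p)%:R - 2 :> R.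
Proof. by move=> np_gt2; rewrite subr_gt0 (ltr_nat R 2). Qed.

Lemma invr_natrD_sub2_le (R : realFieldType) n p :
  (0 < n)%N -> (1 < p)%N -> ((n + p)%:R - 2)^-1 <= 2 / p%:R :> R.
Proof.
move=> n_gt0 p_gt1.
have n_ge1 : 1 <= n%:R :> R by rewrite ler1n.
have p_ge2 : 2 <= p%:R :> R by rewrite (ler_nat R 2).
have np_gt2 : (2 < n + p)%N := leq_add n_gt0 p_gt1.
rewrite -invf_div lef_pV2 ?posrE ?natrD_sub2_gt0 ?divr_gt0 //; last by lra.
by rewrite natrD; lra.
Qed.

Lemma cond_post_mean_sigma2_ge0 (R : realFieldType) n p (X : 'M[R]_(n, p))
    (Y : 'cV[R]_n) (b : 'cV[R]_p) (tau2 : R) (lam2 : 'I_p -> R) :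
  (2 < n + p)%N -> 0 < tau2 -> (forall j, 0 < lam2 j) ->
  0 <= cond_post_mean_sigma2 X Y b tau2 lam2.
Proof.
move=> np_gt2 tau2_gt0 lam2_gt0.
rewrite divr_ge0 ?(ltW (natrD_sub2_gt0 R np_gt2)) // addr_ge0 ?sqnorm_ge0 //.
apply: sumr_ge0 => j _; rewrite divr_ge0 ?sqr_ge0 //.
by rewrite mulr_ge0 ?ltW.
Qed.

Lemma cond_post_mean_sigma2_le_oracle (R : rcfType) n p (X : 'M[R]_(n, p))
    (Y : 'cV[R]_n) (b : 'cV[R]_p) (tau2 : R) (lam2 : 'I_p -> R) (M2 : R) :
  (2 < n + p)%N -> 0 < M2 -> (forall j, b j 0 != 0 -> M2 < tau2 * lam2 j) ->
  cond_post_mean_sigma2 X Y b tau2 lam2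
    <= n%:R * oracle_sigma X Y b ^+ 2 / ((n + p)%:R - 2)
       + (l0norm b)%:R * maxsq b / M2 / ((n + p)%:R - 2).
Proof.
move=> np_gt2 M2_gt0 M2_lt.
have D_gt0 := natrD_sub2_gt0 R np_gt2.
rewrite /cond_post_mean_sigma2 mulr_oracle_sigma_sqr -mulrDl.
rewrite ler_wpM2r ?invr_ge0 ?(ltW D_gt0) // lerD2l.
by apply: sum_sqr_div_le_l0norm_maxsq => // j /M2_lt; rewrite mulrC.
Qed.

Lemma cond_post_mean_sigma2_le_ratios (R : rcfType) n p (X : 'M[R]_(n, p))
    (Y : 'cV[R]_n) (b : 'cV[R]_p) (tau2 : R) (lam2 : 'I_p -> R) (M1 M2 C : R) :
  (0 < n)%N -> (1 < p)%N -> maxsq b <= M1 -> 0 < M2 ->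
  (forall j, b j 0 != 0 -> M2 < tau2 * lam2 j) ->
  `|oracle_sigma X Y b| <= C ->
  cond_post_mean_sigma2 X Y b tau2 lam2
    <= 2 * (C ^+ 2 * (n%:R / p%:R) + M1 / M2 * ((l0norm b)%:R / p%:R)).
Proof.
move=> n_gt0 p_gt1 maxsq_le M2_gt0 M2_lt sigma_le.
have np_gt2 : (2 < n + p)%N := leq_add n_gt0 p_gt1.
apply: le_trans (cond_post_mean_sigma2_le_oracle X Y np_gt2 M2_gt0 M2_lt) _.
have sigma2_le : oracle_sigma X Y b ^+ 2 <= C ^+ 2.
  by rewrite -real_normK ?num_real // lerXn2r ?nnegrE ?(le_trans _ sigma_le).
rewrite -mulrDl (_ : 2 * _ = (n%:R * C ^+ 2 + (l0norm b)%:R * M1 / M2)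
                             * (2 / p%:R)); last by ring.
apply: ler_pM; last exact: invr_natrD_sub2_le.
- apply: addr_ge0; first by rewrite mulr_ge0 ?ler0n ?sqr_ge0.
  by rewrite divr_ge0 ?mulr_ge0 ?ler0n ?maxsq_ge0 ?(ltW M2_gt0).
- by rewrite invr_ge0 ltW ?natrD_sub2_gt0.
- apply: lerD; first by rewrite ler_wpM2l ?ler0n.
  by rewrite ler_wpM2r ?invr_ge0 ?(ltW M2_gt0) // ler_wpM2l ?ler0n.
Qed.

Lemma natr_div_gt1 (R : numFieldType) n p :
  1 < p%:R / n%:R :> R -> (0 < n < p)%N.
Proof.
have [->|n_gt0] := posnP n; first by rewrite invr0 mulr0 ltr10.
by rewrite ltr_pdivlMr ?ltr0n // mul1r ltr_nat.
Qed.

Lemma cond_post_mean_sigma2_cvg0 (R : rcfType) (I : Type) (F : set_system I)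
    (FF : Filter F) (n p : I -> nat) (X : forall k, 'M[R]_(n k, p k))
    (Y : forall k, 'cV[R]_(n k)) (b : forall k, 'cV[R]_(p k))
    (tau2 : I -> R) (lam2 : forall k, 'I_(p k) -> R) (M1 M2 : R) :
  (forall k, (2 < n k + p k)%N) ->
  (forall k, 0 < tau2 k) -> (forall k j, 0 < lam2 k j) ->
  (forall k, maxsq (b k) <= M1) -> 0 < M2 ->
  (forall k j, b k j 0 != 0 -> M2 < tau2 k * lam2 k j) ->
  ((p k)%:R / (n k)%:R : R) @[k --> F] --> +oo ->
  ((l0norm (b k))%:R / (p k)%:R : R) @[k --> F] --> 0 ->
  (exists C : R, \forall k \near F, `|oracle_sigma (X k) (Y k) (b k)| <= C) ->
  cond_post_mean_sigma2 (X k) (Y k) (b k) (tau2 k) (lam2 k) @[k --> F] --> 0.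
Proof.
move=> np_gt2 tau2_gt0 lam2_gt0 maxsq_le M2_gt0 M2_lt /cvgryPgt p_n_large q_p_0
  [C sigma_le].
have n_p_0 : ((n k)%:R / (p k)%:R : R) @[k --> F] --> 0.
  under eq_fun do rewrite -invf_div.
  apply/(gtr0_cvgV0 (f := fun k => (p k)%:R / (n k)%:R)).
    by apply: filterS (p_n_large 0).
  by apply/cvgryPgt.
pose bound k := 2 * (C ^+ 2 * ((n k)%:R / (p k)%:R)
                     + M1 / M2 * ((l0norm (b k))%:R / (p k)%:R)).
apply: (@squeeze_cvgr _ _ _ _ (fun=> 0) bound).
- near=> k.
  have /andP[n_gt0 n_lt_p] : (0 < n k < p k)%N.
    by apply: natr_div_gt1; near: k; exact: p_n_large.
  rewrite cond_post_mean_sigma2_ge0 //=.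
  apply: (cond_post_mean_sigma2_le_ratios n_gt0 (leq_ltn_trans n_gt0 n_lt_p)
           (maxsq_le k) M2_gt0 (M2_lt k)).
  by near: k.
- exact: cvg_cst.
- have -> : 0 = 2 * (C ^+ 2 * 0 + M1 / M2 * 0) :> R by rewrite !(mulr0, addr0).
  by apply: cvgMl_tmp; apply: cvgD; apply: cvgMl_tmp.
Unshelve. all: end_near.
Qed.

Theorem proposition3 (R : realType) :
  (* finite-sample bound *)
  (forall (n p : nat) (X : 'M[R]_(n, p)) (Y : 'cV[R]_n) (betastar : 'cV[R]_p)
          (tau2 : R) (lam2 : 'I_p -> R) (M1 M2 : R),
      (2 < n + p)%N ->
      0 < tau2 -> (forall j, 0 < lam2 j) ->
      maxsq betastar = M1 ->
      0 < M2 ->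
      (forall j, betastar j 0 != 0 -> M2 < tau2 * lam2 j) ->
      cond_post_mean_sigma2 X Y betastar tau2 lam2
        <= n%:R * oracle_sigma X Y betastar ^+ 2 / ((n + p)%:R - 2)
           + (l0norm betastar)%:R * M1 / M2 / ((n + p)%:R - 2))
  /\
  (* asymptotic consequence: p/n -> oo, q/p -> 0, sigma^* = O(1) *)
  (forall (n p : nat -> nat) (X : forall k, 'M[R]_(n k, p k))
          (Y : forall k, 'cV[R]_(n k)) (betastar : forall k, 'cV[R]_(p k))
          (tau2 : nat -> R) (lam2 : forall k, 'I_(p k) -> R) (M1 M2 : R),
      (forall k, (2 < n k + p k)%N) ->
      (forall k, 0 < tau2 k) -> (forall k j, 0 < lam2 k j) ->
      (forall k, maxsq (betastar k) = M1) ->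
      0 < M2 ->
      (forall k j, betastar k j 0 != 0 -> M2 < tau2 k * lam2 k j) ->
      ((p k)%:R / (n k)%:R : R) @[k --> \oo] --> +oo ->
      ((l0norm (betastar k))%:R / (p k)%:R : R) @[k --> \oo] --> 0 ->
      (exists C : R, \forall k \near \oo,
          `|oracle_sigma (X k) (Y k) (betastar k)| <= C) ->
      cond_post_mean_sigma2 (X k) (Y k) (betastar k) (tau2 k) (lam2 k)
        @[k --> \oo] --> 0).
Proof.
split.
- move=> n p X Y b tau2 lam2 M1 M2 np_gt2 _ _ <-.
  exact: cond_post_mean_sigma2_le_oracle.
- move=> n p X Y b tau2 lam2 M1 M2 np_gt2 tau2_gt0 lam2_gt0 maxsq_eq.
  apply: cond_post_mean_sigma2_cvg0 => // k.
  by rewrite maxsq_eq.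
Qed.
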